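(* Let $r\ge1$, $L\ge1$, and $\mathbf s_1,\dots,\mathbf s_L\in V(G_n)_r$ with $a=|\bigcup_{j=1}^L\bar{\mathbf s}_j|$. If $p_n\in(0,1)$ satisfies $\limsup_{n\to\infty}p_n<1$, then $$p_n^a\lesssim_r\mathbb E|Z_{\mathbf s_1}Z_{\mathbf s_2}\cdots Z_{\mathbf s_L}|\le(L+2)!\,p_n^a.$$
   Context: $V(G_n)$ is a finite vertex set; $V(G_n)_r$ is the set of $r$-tuples of distinct elements, $\bar{\mathbf s}$ the set of entries. $\{X_v\}$ are i.i.d. Bernoulli$(p_n)$, $X_{\mathbf s}=\prod_{u=1}^rX_{s_u}$, $Z_{\mathbf s}=X_{\mathbf s}-p_n^r$. $\lesssim_r$ means up to a positive constant depending only on $r$ (and not on $n$). *)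

From mathcomp Require Import all_boot all_order all_algebra.
From mathcomp Require Import all_classical all_reals all_analysis.
Set Implicit Arguments. Unset Strict Implicit. Unset Printing Implicit Defensive.
Import Order.TTheory GRing.Theory Num.Theory.
Local Open Scope ring_scope.

(* Finite probability space of i.i.d. Bernoulli(p) variables {X_v}_{v in V}:
   an outcome is x : {ffun V -> bool}, X_v = x v, with weight
   prod_v (p if x v else 1 - p). *)
Definition bern_weight (R : realType) (V : finType) (p : R) (x : {ffun V -> bool}) : R :=
  \prod_(v : V) (if x v then p else 1 - p).

Definition bern_expect (R : realType) (V : finType) (p : R) (f : {ffun V -> bool} -> R) : R :=
  \sum_(x : {ffun V -> bool}) bern_weight p x * f x.

Definition Xs (R : realType) (V : finType) (r : nat) (s : r.-tuple V) (x : {ffun V -> bool}) : R :=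
  \prod_(i < r) (x (tnth s i))%:R.

Definition Zs (R : realType) (V : finType) (p : R) (r : nat) (s : r.-tuple V) (x : {ffun V -> bool}) : R :=
  Xs R s x - p ^+ r.

Definition entries (V : finType) (r : nat) (s : r.-tuple V) : {set V} := [set v | v \in s].

From mathcomp Require Import all_boot all_order all_algebra.
From mathcomp Require Import all_classical all_reals all_analysis.
Import Order.TTheory GRing.Theory Num.Theory.
Local Open Scope ring_scope.

(* Write U for the union of the entries of the s_j, so that a = |U|.  Since
   |Z_s| <= X_s + p^r, expanding the product bounds |Z_s1 ... Z_sL| by a sum
   of 2^L terms, each a product of some X_sj and some constants p^r; such a
   term has expectation p^(r k + |union of the chosen entries|) <= p^a, where k
   counts the constants.  Conversely on the event {X_v = 1 for all v in U},
   of probability p^a, every Z_sj equals 1 - p^r >= 1 - q > 0, where q < 1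
   bounds the whole sequence p_n thanks to limsup p_n < 1. *)

Section uniform_bound.
Context {R : realType}.
Implicit Types (u : R^nat) (l : R).

Lemma limn_sup_lt_eventually {u l} : bounded_fun u -> limn_sup u < l ->
  exists2 q, q < l & exists N, forall n, (N <= n)%N -> u n <= q.
Proof.
move=> bu; rewrite limn_supE //.
have sups_ne0 : (range (sups u) !=set0)%classic by exists (sups u 0), 0%N.
move=> /(inf_lt sups_ne0) [_ [N _ <-] supsN_lt]; exists (sups u N) => //.
exists N => n Nn; apply: ub_le_sup; last by exists n.
exact/has_ubound_sdrop/bounded_fun_has_ubound.
Qed.

Lemma lt_prefix_bound {u l} N : (forall n, u n < l) ->
  exists2 q, q < l & forall n, (n < N)%N -> u n <= q.
Proof.
move=> ul; elim: N => [|N [q ql uq]]; first by exists (l - 1) => //; rewrite ltrBlDr ltrDl.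
exists (Num.max q (u N)); first by rewrite gt_max ql ul.
move=> n; rewrite ltnS leq_eqVlt => /orP[/eqP->|/uq unq].
  by rewrite le_max lexx orbT.
by rewrite le_max unq.
Qed.

Lemma limn_sup_lt_uniform {u l} : bounded_fun u -> (forall n, u n < l) ->
  limn_sup u < l -> exists2 q, q < l & forall n, u n <= q.
Proof.
move=> bu ul /(limn_sup_lt_eventually bu) [q1 q1l [N uq1]].
have [q2 q2l uq2] := lt_prefix_bound N ul.
exists (Num.max q1 q2) => [|n]; first by rewrite gt_max q1l q2l.
by case: (ltnP n N) => [/uq2|/uq1] un; rewrite le_max un ?orbT.
Qed.

End uniform_bound.

Lemma prod_nat_bool (R : comPzSemiRingType) (I : finType) (P : pred I) (b : I -> bool) :
  \prod_(i | P i) ((b i)%:R : R) = [forall (i | P i), b i]%:R.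
Proof.
have [/forall_inP bP | /forall_inPn [i Pi /negbTE bi]] := boolP [forall (i | P i), b i].
  by apply: big1 => i /bP ->.
by rewrite (bigD1 i Pi) /= bi mul0r.
Qed.

Lemma prod_subset_indicator (R : comPzSemiRingType) (T I : finType) (P : pred I)
    (A : I -> {set T}) (B : {set T}) :
  \prod_(i | P i) ((A i \subset B)%:R : R) = (\bigcup_(i | P i) A i \subset B)%:R.
Proof. by rewrite prod_nat_bool; congr (nat_of_bool _)%:R; apply/forall_inP/bigcupsP. Qed.

Definition ones {V : finType} (x : {ffun V -> bool}) : {set V} := [set v | x v].

Lemma subset_ones_prod (R : comPzSemiRingType) (V : finType) (A : {set V}) x :
  ((A \subset ones x)%:R : R) = \prod_(v in A) (x v)%:R.
Proof.
rewrite prod_nat_bool; congr (nat_of_bool _)%:R.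
by apply/fintype.subsetP/forall_inP => xA v /xA; rewrite inE.
Qed.

Lemma Xs_subset_ones (R : realType) (V : finType) (r : nat) (s : r.-tuple V) x :
  Xs R s x = (entries s \subset ones x)%:R.
Proof.
rewrite /Xs prod_nat_bool; congr (nat_of_bool _)%:R; apply/forall_inP/fintype.subsetP.
  by move=> xs v; rewrite !inE => /tnthP [i ->]; exact: xs.
by move=> sx i _; have := sx (tnth s i); rewrite !inE mem_tnth; exact.
Qed.

Section bernoulli.
Context {R : realType} {V : finType} (p : R).
Implicit Types (x : {ffun V -> bool}) (f g : {ffun V -> bool} -> R).

Lemma bern_weight_ge0 x : 0 <= p <= 1 -> 0 <= bern_weight p x.
Proof.
move=> /andP[p0 p1]; apply: prodr_ge0 => v _.
by case: (x v); rewrite ?subr_ge0.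
Qed.

Lemma ler_bern_expect {f g} : 0 <= p <= 1 -> (forall x, f x <= g x) ->
  bern_expect p f <= bern_expect p g.
Proof.
move=> p01 fg; apply: ler_sum => x _.
by apply: ler_wpM2l; [exact: bern_weight_ge0 | exact: fg].
Qed.

Lemma bern_expectZ c f : bern_expect p (fun x => c * f x) = c * bern_expect p f.
Proof. by rewrite /bern_expect mulr_sumr; apply: eq_bigr => x _; rewrite mulrCA. Qed.

Lemma bern_expect_sum (I : finType) (g : I -> {ffun V -> bool} -> R) :
  bern_expect p (fun x => \sum_i g i x) = \sum_i bern_expect p (g i).
Proof.
rewrite /bern_expect -exchange_big; apply: eq_bigr => x _.
by rewrite mulr_sumr.
Qed.

(* The weight and the indicator are both products over V, so the sum over
   outcomes factorises coordinatewise (independence). *)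
Lemma bern_expect_subset_ones (A : {set V}) :
  bern_expect p (fun x => (A \subset ones x)%:R) = p ^+ #|A|.
Proof.
pose F v (b : bool) := (if b then p else 1 - p) * (if v \in A then b%:R else 1).
rewrite /bern_expect /bern_weight (eq_bigr (fun x => \prod_v F v (x v))); last first.
  move=> x _; rewrite subset_ones_prod [X in _ * X]big_mkcond -big_split.
  exact: eq_bigr.
rewrite -bigA_distr_bigA (eq_bigr (fun v => if v \in A then p else 1)).
  by rewrite -big_mkcond prodr_const.
move=> v _; rewrite big_bool /F; case: (v \in A) => /=.
  by rewrite mulr1 mulr0 addr0.
by rewrite !mulr1 addrC subrK.
Qed.

End bernoulli.

Section prod_Zs.
Context {R : realType} {V : finType} {r L : nat} (s : 'I_L -> r.-tuple V) {p : R}.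
Hypothesis p01 : 0 <= p <= 1.

Let p_ge0 : 0 <= p. Proof. by case/andP: p01. Qed.
Let p_le1 : p <= 1. Proof. by case/andP: p01. Qed.

Lemma prod_Xs_or_const (c : R) (f : {ffun 'I_L -> bool}) x :
  \prod_(j < L) (if f j then Xs R (s j) x else c) =
  c ^+ #|[set j | ~~ f j]| * (\bigcup_(j | f j) entries (s j) \subset ones x)%:R.
Proof.
rewrite (bigID f) /= mulrC -prod_subset_indicator; congr (_ * _).
  rewrite -prodr_const [RHS](eq_bigl (fun j => ~~ f j)) => [|j]; last by rewrite inE.
  by apply: eq_bigr => j /negbTE ->.
by apply: eq_bigr => j ->; rewrite Xs_subset_ones.
Qed.

Lemma card_bigcup_entries_le (P : pred 'I_L) :
  (#|\bigcup_(j | P j) entries (s j)| <= #|P| * r)%N.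
Proof.
apply: leq_trans (unstable.card_big_setU _ _ _) _.
rewrite -sum1_card big_distrl /=; apply: leq_sum => j _.
by rewrite mul1n /entries cardsE -[X in (_ <= X)%N](size_tuple (s j)) card_size.
Qed.

Lemma bern_expect_prod_Xs_or_const_le (f : {ffun 'I_L -> bool}) :
  bern_expect p (fun x => \prod_(j < L) (if f j then Xs R (s j) x else p ^+ r))
    <= p ^+ #|\bigcup_(j < L) entries (s j)|.
Proof.
under eq_fun do rewrite prod_Xs_or_const.
rewrite bern_expectZ bern_expect_subset_ones -exprM -exprD.
rewrite ler_wiXn2l //.
rewrite [in X in (X <= _)%N](bigID f) /= addnC.
apply: leq_trans (leq_of_leqif (leq_card_setU _ _)) _; rewrite leq_add2l mulnC.
by apply: leq_trans (card_bigcup_entries_le _) _; rewrite cardsE.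
Qed.

Lemma normr_Zs_le (t : r.-tuple V) x : `|Zs p t x| <= Xs R t x + p ^+ r.
Proof.
apply: le_trans (ler_normB _ _) _.
by rewrite Xs_subset_ones normr_nat ger0_norm ?exprn_ge0.
Qed.

Lemma normr_prod_Zs_le x :
  `|\prod_(j < L) Zs p (s j) x|
    <= \sum_(f : {ffun 'I_L -> bool}) \prod_(j < L) (if f j then Xs R (s j) x else p ^+ r).
Proof.
rewrite -(bigA_distr_bigA (fun j (b : bool) => if b then Xs R (s j) x else p ^+ r)).
rewrite normr_prod; apply: ler_prod => j _.
by rewrite normr_ge0 big_bool /= normr_Zs_le.
Qed.

Lemma normr_prod_Zs_ge x :
  (1 - p ^+ r) ^+ L * (\bigcup_(j < L) entries (s j) \subset ones x)%:R
    <= `|\prod_(j < L) Zs p (s j) x|.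
Proof.
have [/bigcupsP sx | _] := boolP (_ \subset _); last by rewrite mulr0.
rewrite mulr1 normr_prod -[in X in X <= _](card_ord L) -prodr_const.
apply: ler_prod => j _; rewrite /Zs Xs_subset_ones sx //.
by rewrite ger0_norm subr_ge0 ?exprn_ile1 ?lexx.
Qed.

Lemma bern_expect_prod_Zs_ge :
  (1 - p ^+ r) ^+ L * p ^+ #|\bigcup_(j < L) entries (s j)|
    <= bern_expect p (fun x => `|\prod_(j < L) Zs p (s j) x|).
Proof.
rewrite -bern_expect_subset_ones -bern_expectZ.
exact: ler_bern_expect normr_prod_Zs_ge.
Qed.

Lemma bern_expect_prod_Zs_le :
  bern_expect p (fun x => `|\prod_(j < L) Zs p (s j) x|)
    <= (2 ^ L)%:R * p ^+ #|\bigcup_(j < L) entries (s j)|.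
Proof.
apply: le_trans (ler_bern_expect p p01 normr_prod_Zs_le) _.
rewrite bern_expect_sum.
apply: le_trans (ler_sum _ (fun f _ => bern_expect_prod_Xs_or_const_le f)) _.
by rewrite sumr_const card_ffun card_bool card_ord mulr_natl.
Qed.

End prod_Zs.

Lemma leq_exp2_fact n : (2 ^ n <= n.+1`!)%N.
Proof.
elim: n => [//|n IHn].
by rewrite expnS factS leq_mul.
Qed.

Theorem lemma4p2 (R : realType) (r L : nat) (hr : (1 <= r)%N) (hL : (1 <= L)%N)
    (V : nat -> finType) (p : nat -> R)
    (hp : forall n, 0 < p n < 1) (hlimsup : limn_sup p < 1) :
  exists c : R, 0 < c /\
    forall (n : nat) (s : 'I_L -> r.-tuple (V n)),
      (forall j, uniq (s j)) ->
      let a := #|\bigcup_(j < L) entries (s j)| in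
      let E := bern_expect (p n)
                 (fun x => `| \prod_(j < L) Zs (p n) (s j) x |) in
      c * p n ^+ a <= E /\ E <= (L + 2)`!%:R * p n ^+ a.
Proof.
have p01 n : 0 <= p n <= 1 by case/andP: (hp n) => /ltW -> /ltW ->.
have bp : bounded_fun p.
  exists 1; split => // M M1 n _; case/andP: (p01 n) => p0 p1.
  by rewrite /= ger0_norm // (le_trans p1) // ltW.
have [q q1 pq] := limn_sup_lt_uniform bp (fun n => proj2 (andP (hp n))) hlimsup.
exists ((1 - q) ^+ L); split; first by rewrite exprn_gt0 // subr_gt0.
move=> n s _ a E; have [p0 p1] := andP (p01 n).
have pa_ge0 : 0 <= p n ^+ a := exprn_ge0 a p0.
split.
- apply: le_trans (bern_expect_prod_Zs_ge s (p01 n)); apply: ler_wpM2r => //.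
  have prq : p n ^+ r <= q := le_trans (ler_iXnr hr p0 p1) (pq n).
  rewrite lerXn2r ?nnegrE ?subr_ge0 ?(ltW q1) ?exprn_ile1 //.
  by rewrite lerD2l lerN2.
- apply: le_trans (bern_expect_prod_Zs_le s (p01 n)) _; apply: ler_wpM2r => //.
  by rewrite ler_nat (leq_trans (leq_exp2_fact L)) // leq_fact // addn2.
Qed.
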